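(* Let $\mathsf V$ be a quantale, $X=(X,a)$ a $\mathsf V$-category, $(x_n)_{n\in\mathbb N}$ a Cauchy sequence in $X$ and $x\in X$. Then $$\bigvee_{N}\bigwedge_{n\ge N}a(x_n,x)=\bigwedge_{N}\bigvee_{n\ge N}a(x_n,x)\quad\text{and}\quad\bigvee_{N}\bigwedge_{n\ge N}a(x,x_n)=\bigwedge_{N}\bigvee_{n\ge N}a(x,x_n).$$
   Context: A quantale $(\mathsf V,\otimes,k)$ is a complete anti-symmetric lattice with an associative, commutative operation $\otimes$ with neutral element $k$ distributing over arbitrary suprema. A $\mathsf V$-category $(X,a)$ is a set with $a:X\times X\to\mathsf V$ such that $k\le a(x,x)$ and $a(x,y)\otimes a(y,z)\le a(x,z)$. A sequence $s=(x_n)$ is Cauchy if $k\le\bigvee_{N}\bigwedge_{n,m\ge N}a(x_n,x_m)$. *)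

(* A quantale is encoded as a complete lattice given by an
   arbitrary-supremum operator, with an associative commutative tensor
   with neutral element, distributing over arbitrary suprema. *)
From Stdlib Require Import Arith.

Record quantale := Quantale {
  qcar :> Type;
  qle : qcar -> qcar -> Prop;
  qsup : (qcar -> Prop) -> qcar;
  qten : qcar -> qcar -> qcar;
  qk : qcar;
  qle_refl : forall x, qle x x;
  qle_trans : forall x y z, qle x y -> qle y z -> qle x z;
  qle_antisym : forall x y, qle x y -> qle y x -> x = y;
  qsup_ub : forall (S : qcar -> Prop) x, S x -> qle x (qsup S);
  qsup_least : forall (S : qcar -> Prop) y,
      (forall x, S x -> qle x y) -> qle (qsup S) y;
  qten_assoc : forall x y z, qten x (qten y z) = qten (qten x y) z;
  qten_comm : forall x y, qten x y = qten y x;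
  qten_unit : forall x, qten qk x = x;
  qten_sup : forall x (S : qcar -> Prop),
      qten x (qsup S) = qsup (fun z => exists y, S y /\ z = qten x y)
}.

Arguments qle {q}.
Arguments qsup {q}.
Arguments qten {q}.
Arguments qk {q}.

Definition qinf {V : quantale} (S : V -> Prop) : V :=
  qsup (fun y => forall x, S x -> qle y x).

Definition qSup {V : quantale} {I : Type} (P : I -> Prop) (f : I -> V) : V :=
  qsup (fun z => exists i, P i /\ z = f i).
Definition qInf {V : quantale} {I : Type} (P : I -> Prop) (f : I -> V) : V :=
  qinf (fun z => exists i, P i /\ z = f i).

Definition is_Vcategory (V : quantale) (X : Type) (a : X -> X -> V) : Prop :=
  (forall x, qle qk (a x x)) /\
  (forall x y z, qle (qten (a x y) (a y z)) (a x z)).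

Definition is_Cauchy (V : quantale) (X : Type) (a : X -> X -> V)
  (s : nat -> X) : Prop :=
  qle qk (qSup (fun _ : nat => True) (fun N =>
            qInf (fun nm : nat * nat => N <= fst nm /\ N <= snd nm)
                 (fun nm => a (s (fst nm)) (s (snd nm))))).

Definition liminf_q {V : quantale} (f : nat -> V) : V :=
  qSup (fun _ : nat => True) (fun N => qInf (fun n => N <= n) f).
Definition limsup_q {V : quantale} (f : nat -> V) : V :=
  qInf (fun _ : nat => True) (fun N => qSup (fun n => N <= n) f).

(* The inequality liminf <= limsup holds for any sequence in a complete lattice.
   Conversely, writing c_N := /\_{n,m >= N} a(x_n, x_m), the triangle inequality
   gives c_N (x) a(x_m, x) <= a(x_n, x) for all m, n >= N, hence
   c_N (x) \/_{m >= N} a(x_m, x) <= /\_{n >= N} a(x_n, x).  Since k <= \/_N c_N and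
   the tensor distributes over suprema, limsup <= limsup (x) \/_N c_N
   = \/_N (limsup (x) c_N) <= liminf; the other variable is symmetric. *)
From Stdlib Require Import Arith Lia.

Section QuantaleFacts.
Variable V : quantale.

Lemma qSup_ub {I : Type} (P : I -> Prop) (f : I -> V) i :
  P i -> qle (f i) (qSup P f).
Proof. intros Pi. apply qsup_ub. exists i; auto. Qed.

Lemma qSup_least {I : Type} (P : I -> Prop) (f : I -> V) y :
  (forall i, P i -> qle (f i) y) -> qle (qSup P f) y.
Proof. intros Hf. apply qsup_least. intros z [i [Pi ->]]; auto. Qed.

Lemma qInf_lb {I : Type} (P : I -> Prop) (f : I -> V) i :
  P i -> qle (qInf P f) (f i).
Proof. intros Pi. apply qsup_least. intros z Hz. apply Hz. exists i; auto. Qed.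

Lemma qInf_glb {I : Type} (P : I -> Prop) (f : I -> V) y :
  (forall i, P i -> qle y (f i)) -> qle y (qInf P f).
Proof. intros Hf. apply qsup_ub. intros z [i [Pi ->]]; auto. Qed.

Lemma qten_qSup {I : Type} (x : V) (P : I -> Prop) (f : I -> V) :
  qten x (qSup P f) = qSup P (fun i => qten x (f i)).
Proof.
  unfold qSup. rewrite qten_sup.
  apply qle_antisym; apply qsup_least; intros z Hz; apply qsup_ub.
  - destruct Hz as [y [[i [Pi ->]] ->]]. exists i; auto.
  - destruct Hz as [i [Pi ->]]. exists (f i); split; [exists i|]; auto.
Qed.

(* Monotonicity follows from distributivity over the two-element supremum {y, y'}. *)
Lemma qten_monor (x y y' : V) : qle y y' -> qle (qten x y) (qten x y').
Proof.
  intros Hyy'.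
  assert (Hsup : qsup (fun z => z = y \/ z = y') = y').
  { apply qle_antisym.
    - apply qsup_least. intros z [-> | ->]; auto using qle_refl.
    - apply qsup_ub; auto. }
  rewrite <- Hsup, qten_sup. apply qsup_ub. exists y; split; auto.
Qed.

Lemma qten_monol (x y y' : V) : qle y y' -> qle (qten y x) (qten y' x).
Proof. intros Hyy'. rewrite (qten_comm V y x), (qten_comm V y' x). now apply qten_monor. Qed.

Lemma qle_ten_unit (x y : V) : qle qk y -> qle x (qten x y).
Proof.
  intros Hy. rewrite <- (qten_unit V x) at 1. rewrite (qten_comm V qk x).
  now apply qten_monor.
Qed.

Lemma liminf_le_limsup (f : nat -> V) : qle (liminf_q f) (limsup_q f).
Proof.
  apply qSup_least. intros N _. apply qInf_glb. intros M _.
  apply qle_trans with (f (max N M)).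
  - apply qInf_lb. lia.
  - apply qSup_ub. lia.
Qed.

Lemma tail_sup_ten_le_tail_inf (f : nat -> V) (c : V) N :
  (forall m n, N <= m -> N <= n -> qle (qten c (f m)) (f n)) ->
  qle (qten (qSup (fun n => N <= n) f) c) (qInf (fun n => N <= n) f).
Proof.
  intros Hc. rewrite qten_comm, qten_qSup. apply qSup_least. intros m Hm.
  apply qInf_glb. intros n Hn. auto.
Qed.

Lemma limsup_le_liminf (f : nat -> V) (c : nat -> V) :
  qle qk (qSup (fun _ : nat => True) c) ->
  (forall N m n, N <= m -> N <= n -> qle (qten (c N) (f m)) (f n)) ->
  qle (limsup_q f) (liminf_q f).
Proof.
  intros Hk Hc.
  apply qle_trans with (qten (limsup_q f) (qSup (fun _ : nat => True) c)).
  { now apply qle_ten_unit. }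
  rewrite qten_qSup. apply qSup_least. intros N _.
  apply qle_trans with (qInf (fun n => N <= n) f).
  - apply qle_trans with (qten (qSup (fun n => N <= n) f) (c N)).
    + apply qten_monol.
      apply (qInf_lb (fun _ : nat => True) (fun N => qSup (fun n => N <= n) f)).
      exact I.
    + apply tail_sup_ten_le_tail_inf. exact (Hc N).
  - apply (qSup_ub (fun _ : nat => True) (fun N => qInf (fun n => N <= n) f)).
    exact I.
Qed.

Lemma liminf_eq_limsup (f : nat -> V) (c : nat -> V) :
  qle qk (qSup (fun _ : nat => True) c) ->
  (forall N m n, N <= m -> N <= n -> qle (qten (c N) (f m)) (f n)) ->
  liminf_q f = limsup_q f.
Proof.
  intros Hk Hc. apply qle_antisym.
  - apply liminf_le_limsup.
  - now apply limsup_le_liminf with c.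
Qed.

End QuantaleFacts.

Section CauchySequence.
Variables (V : quantale) (X : Type) (a : X -> X -> V) (s : nat -> X).
Hypothesis a_trans : forall x y z, qle (qten (a x y) (a y z)) (a x z).

Definition cauchy_tail (N : nat) : V :=
  qInf (fun nm : nat * nat => N <= fst nm /\ N <= snd nm)
       (fun nm => a (s (fst nm)) (s (snd nm))).

Lemma cauchy_tail_le N m n : N <= m -> N <= n -> qle (cauchy_tail N) (a (s m) (s n)).
Proof.
  intros Hm Hn. apply (qInf_lb V _ (fun nm => a (s (fst nm)) (s (snd nm))) (m, n)).
  simpl; auto.
Qed.

Lemma cauchy_tail_ten_left N m n x :
  N <= m -> N <= n -> qle (qten (cauchy_tail N) (a (s m) x)) (a (s n) x).
Proof.
  intros Hm Hn. apply qle_trans with (qten (a (s n) (s m)) (a (s m) x)).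
  - apply qten_monol, cauchy_tail_le; assumption.
  - apply a_trans.
Qed.

Lemma cauchy_tail_ten_right N m n x :
  N <= m -> N <= n -> qle (qten (cauchy_tail N) (a x (s m))) (a x (s n)).
Proof.
  intros Hm Hn. rewrite qten_comm.
  apply qle_trans with (qten (a x (s m)) (a (s m) (s n))).
  - apply qten_monor, cauchy_tail_le; assumption.
  - apply a_trans.
Qed.

End CauchySequence.

Theorem corollary3p12 (V : quantale) (X : Type) (a : X -> X -> V)
  (s : nat -> X) (x : X) :
  is_Vcategory V X a -> is_Cauchy V X a s ->
  liminf_q (fun n => a (s n) x) = limsup_q (fun n => a (s n) x) /\
  liminf_q (fun n => a x (s n)) = limsup_q (fun n => a x (s n)).
Proof.
  intros [_ a_trans] s_Cauchy.
  split; apply (liminf_eq_limsup V _ (cauchy_tail V X a s) s_Cauchy);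
    intros N m n Hm Hn.
  - now apply cauchy_tail_ten_left.
  - now apply cauchy_tail_ten_right.
Qed.
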